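(* Let $\sim$ denote either $\cong$ or $\simeq$. For a type expression $A$ the following are equivalent: (a) $A\in\mathbf{TF}$; (b) $A$ is tail finite; (c) $A\not\sim\top$; (d) $A$ is not a $\top$-variant.
   Context: Type expressions: fix a countably infinite set of type variables $X,Y,Z,\dots$. Pseudo type expressions are generated by $A::=X\mid A\to A\mid \bullet A\mid \mu X.A$ ($\mu$ binds $X$; $\alpha$-convertible expressions are identified; $\to$ associates to the right; $\bullet$ binds tighter than $\to$, which binds tighter than $\mu$). $A[B/X]$ denotes capture-avoiding substitution. $\top$ abbreviates $\mu X.\bullet X$, and $\bullet^n A$ denotes $A$ prefixed by $n$ copies of $\bullet$. The tail $t(A)$ is defined by $t(X)=X$, $t(A\to B)=t(B)$, $t(\bullet A)=\bullet t(A)$, $t(\mu X.A)=\mu X.t(A)$; it always has the form $\bullet^{m_0}\mu X_1.\bullet^{m_1}\mu X_2.\cdots\mu X_n.\bullet^{m_n}Y$. $A$ is a $\top$-variant iff $Y=X_i$ for some $1\le i\le n$ with $X_i\notin\{X_{i+1},\dots,X_n\}$ and $m_i+\dots+m_n\ge 1$. $A$ is proper in $X$ iff: a variable $Y$ is proper in $X$ iff $Y\neq X$; $\bullet A$ is always proper in $X$; $A\to B$ is proper in $X$ iff both $A,B$ are proper in $X$ or $B$ is a $\top$-variant; for $Y\ne X$, $\mu Y.A$ is proper in $X$ iff $A$ is proper in $X$ or $\mu Y.A$ is a $\top$-variant. Type expressions are the least set of pseudo type expressions containing all type variables, closed under $\to$ and $\bullet$, and containing $\mu X.A$ whenever it contains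 $A$ and $A$ is proper in $X$. Equality: $\cong$ is the least relation on type expressions such that: $A\cong A$; $A\cong B$ implies $B\cong A$; $A\cong B$ and $B\cong C$ imply $A\cong C$; $A\cong B$ implies $\bullet A\cong\bullet B$; $A\cong C$ and $B\cong D$ imply $A\to B\cong C\to D$; $A\to\top\cong\top$; $\mu X.A\cong A[\mu X.A/X]$; and if $A\cong C[A/X]$ with $C$ proper in $X$, then $A\cong\mu X.C$. $\simeq$ is the least relation satisfying the same closure conditions and additionally $\bullet(A\to B)\simeq\bullet A\to\bullet B$. Tail finiteness: $A$ is tail finite iff $A\cong\bullet^{m_0}(B_1\to\bullet^{m_1}(B_2\to\cdots\to\bullet^{m_{n-1}}(B_n\to\bullet^{m_n}X)\cdots))$ for some $n,m_0,\dots,m_n\ge0$, type expressions $B_1,\dots,B_n$ and type variable $X$. For a set $V$ of type variables, $\mathbf{TF}^V$ is the least set of type expressions such that: $X\in\mathbf{TF}^V$ for every type variable $X\notin V$; $\bullet A\in\mathbf{TF}^V$ if $A\in\mathbf{TF}^V$; $A\to B\in\mathbf{TF}^V$ for every type expression $A$ if $B\in\mathbf{TF}^V$; $\mu X.A\in\mathbf{TF}^V$ if $\mu X.A$ is a type expression and $A\in\mathbf{TF}^{V\cup\{X\}}$. $\mathbf{TF}=\mathbf{TF}^{\emptyset}$. *)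

(* Type expressions in de Bruijn representation
   (alpha-convertible expressions are identified, as in the paper). *)
From Stdlib Require Import List Arith.
Import ListNotations.

Inductive ty : Type :=
| TVar (n : nat)
| TArr (A B : ty)
| TLater (A : ty)
| TMu (A : ty).           (* mu binds de Bruijn index 0 in A *)

Fixpoint lift (c : nat) (A : ty) : ty :=
  match A with
  | TVar n => if c <=? n then TVar (S n) else TVar n
  | TArr A1 A2 => TArr (lift c A1) (lift c A2)
  | TLater A1 => TLater (lift c A1)
  | TMu A1 => TMu (lift (S c) A1)
  end.

(* capture-avoiding substitution of B for variable k in A
   (variables above k are decremented, since the binder of k disappears) *)
Fixpoint subst (k : nat) (B : ty) (A : ty) : ty :=
  match A with
  | TVar n => if n =? k then B else if k <? n then TVar (pred n) else TVar n
  | TArr A1 A2 => TArr (subst k B A1) (subst k B A2)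
  | TLater A1 => TLater (subst k B A1)
  | TMu A1 => TMu (subst (S k) (lift 0 B) A1)
  end.

(* A[B/X] where X is the variable bound by the enclosing mu (index 0) *)
Definition subst0 (B A : ty) : ty := subst 0 B A.

Definition top : ty := TMu (TLater (TVar 0)).

Fixpoint bullets (n : nat) (A : ty) : ty :=
  match n with 0 => A | S n' => TLater (bullets n' A) end.

Fixpoint tail (A : ty) : ty :=
  match A with
  | TVar n => TVar n
  | TArr _ B => tail B
  | TLater A1 => TLater (tail A1)
  | TMu A1 => TMu (tail A1)
  end.

(* On a tail  bullet^{m0} mu X1. bullet^{m1} ... mu Xn. bullet^{mn} Y :
   ctx records, for each enclosing mu (innermost first), whether at least
   one bullet occurs between that mu and the current position.  The final
   variable Y = X_i (bound by the i-th mu) with m_i+...+m_n >= 1 iff the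
   entry of ctx for its binder is true. *)
Fixpoint tv_aux (A : ty) (ctx : list bool) : bool :=
  match A with
  | TVar n => nth n ctx false
  | TArr _ _ => false   (* does not occur in tails *)
  | TLater A1 => tv_aux A1 (map (fun _ => true) ctx)
  | TMu A1 => tv_aux A1 (false :: ctx)
  end.

Definition top_variant (A : ty) : bool := tv_aux (tail A) [].

Fixpoint proper (x : nat) (A : ty) : bool :=
  match A with
  | TVar n => negb (n =? x)
  | TLater _ => true
  | TArr A1 B => (proper x A1 && proper x B) || top_variant B
  | TMu A1 => proper (S x) A1 || top_variant (TMu A1)
  end.

Inductive wf : ty -> Prop :=
| wf_var n : wf (TVar n)
| wf_arr A B : wf A -> wf B -> wf (TArr A B)
| wf_later A : wf A -> wf (TLater A)
| wf_mu A : wf A -> proper 0 A = true -> wf (TMu A).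

(* eqty false is the relation ≅ ; eqty true is ≃ (with the extra
   distributivity axiom bullet(A->B) ≃ bullet A -> bullet B). *)
Inductive eqty (dist : bool) : ty -> ty -> Prop :=
| eq_refl A : wf A -> eqty dist A A
| eq_sym A B : eqty dist A B -> eqty dist B A
| eq_trans A B C : eqty dist A B -> eqty dist B C -> eqty dist A C
| eq_later A B : eqty dist A B -> eqty dist (TLater A) (TLater B)
| eq_arr A B C D : eqty dist A C -> eqty dist B D ->
    eqty dist (TArr A B) (TArr C D)
| eq_arr_top A : wf A -> eqty dist (TArr A top) top
| eq_unfold A : wf (TMu A) -> eqty dist (TMu A) (subst0 (TMu A) A)
| eq_contract A C : wf A -> wf C -> proper 0 C = true ->
    eqty dist A (subst0 A C) -> eqty dist A (TMu C)
| eq_dist A B : dist = true -> wf A -> wf B ->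
    eqty dist (TLater (TArr A B)) (TArr (TLater A) (TLater B)).

Definition cong := eqty false.
Definition simeq := eqty true.

(* bullet^{m0}(B1 -> bullet^{m1}(B2 -> ... -> bullet^{m_{n-1}}(Bn -> bullet^{mn} X)...))
   encoded by l = [(m0,B1); ...; (m_{n-1},Bn)], final count mn and variable X *)
Fixpoint tf_form (l : list (nat * ty)) (mn : nat) (x : nat) : ty :=
  match l with
  | [] => bullets mn (TVar x)
  | (m, B) :: l' => bullets m (TArr B (tf_form l' mn x))
  end.

Definition tail_finite (A : ty) : Prop :=
  exists (l : list (nat * ty)) (mn x : nat),
    Forall (fun p => wf (snd p)) l /\ cong A (tf_form l mn x).

(* TF^V, with V a set of variables (de Bruijn indices relative to the
   current position); entering a mu shifts V and adds the bound index 0. *)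
Inductive TFV : (nat -> Prop) -> ty -> Prop :=
| tf_var (V : nat -> Prop) n : ~ V n -> TFV V (TVar n)
| tf_later (V : nat -> Prop) A : TFV V A -> TFV V (TLater A)
| tf_arr (V : nat -> Prop) A B : wf A -> TFV V B -> TFV V (TArr A B)
| tf_mu (V : nat -> Prop) A : wf (TMu A) ->
    TFV (fun n => match n with 0 => True | S k => V k end) A -> TFV V (TMu A).

Definition TF (A : ty) : Prop := TFV (fun _ => False) A.

(* Every type expression has a tail value: either [bullet^k X] for a free
   variable [X], or "infinite", obtained by reading the tail with all
   [mu]-bound variables valued infinite.  It is invariant under both equalities:
   unfolding or contracting a proper [mu] cannot change it, and distributivity
   does not touch the tail.  It is infinite for [top] and finite for the tail
   finite normal forms, so (b) implies (c).  A [top]-variant is equal to [top]: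
   substitute [top] for the variables bound along its tail and contract the
   [mu]s back, so (c) implies (d).  A non-[top]-variant is in TF by induction
   along the tail, and a member of TF is tail finite by unfolding the [mu]s of
   its tail, which does not increase the length of the tail spine. *)

From Stdlib Require Import List Arith Lia Bool.
Import ListNotations.

Ltac case_nat_tests :=
  repeat match goal with
  | |- context [Nat.ltb ?a ?b] => destruct (Nat.ltb_spec a b)
  | |- context [Nat.leb ?a ?b] => destruct (Nat.leb_spec a b)
  | |- context [Nat.eqb ?a ?b] => destruct (Nat.eqb_spec a b)
  end.

(** * Tail values *)

(* [Fin k x]: the tail ends in [bullet^k x] with [x] free; [Inf]: it ends in a
   bound variable, so the expression behaves like [top]. *)
Inductive tval : Type := Fin (k x : nat) | Inf.

Definition tval_later (v : tval) : tval :=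
  match v with Fin k x => Fin (S k) x | Inf => Inf end.

Fixpoint tval_laters (m : nat) (v : tval) : tval :=
  match m with 0 => v | S m => tval_later (tval_laters m v) end.

Definition env := nat -> tval.

Definition env_cons (v : tval) (r : env) : env :=
  fun n => match n with 0 => v | S m => r m end.

Definition env_ins (k : nat) (v : tval) (r : env) : env :=
  fun n => if n <? k then r n else if n =? k then v else r (pred n).

Definition env_del (c : nat) (r : env) : env :=
  fun n => if c <=? n then r (S n) else r n.

Fixpoint tail_value (A : ty) (r : env) : tval :=
  match A with
  | TVar n => r n
  | TArr _ B => tail_value B r
  | TLater A1 => tval_later (tail_value A1 r)
  | TMu A1 => tail_value A1 (env_cons Inf r)
  end.

Lemma tval_laters_Inf m : tval_laters m Inf = Inf.
Proof. induction m as [|m IH]; simpl; [|rewrite IH]; reflexivity. Qed.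

Lemma tval_laters_Fin m k x : tval_laters m (Fin k x) = Fin (m + k) x.
Proof. induction m as [|m IH]; simpl; [|rewrite IH]; reflexivity. Qed.

Lemma tval_laters_fixpoint m v : tval_laters (S m) v = v -> v = Inf.
Proof.
  destruct v as [k x|]; [|reflexivity].
  rewrite tval_laters_Fin. intros [= Hk]. lia.
Qed.

Lemma env_ins_cons k v w r n :
  env_ins (S k) v (env_cons w r) n = env_cons w (env_ins k v r) n.
Proof.
  unfold env_ins, env_cons. destruct n as [|n]; case_nat_tests; try lia; auto.
  destruct n; [lia | reflexivity].
Qed.

Lemma env_cons_ins0 v r n : env_cons v r n = env_ins 0 v r n.
Proof. unfold env_ins, env_cons. destruct n; case_nat_tests; try lia; auto. Qed.

Lemma tail_value_ext A r r' :
  (forall n, r n = r' n) -> tail_value A r = tail_value A r'.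
Proof.
  revert r r'; induction A as [n|A1 _ A2 IH2|A1 IH|A1 IH]; intros r r' Hr; simpl; auto.
  - rewrite (IH r r'); auto.
  - apply IH. intros [|n]; simpl; auto.
Qed.

Lemma tail_value_tail A r : tail_value (tail A) r = tail_value A r.
Proof. revert r; induction A; intros r; simpl; auto. rewrite IHA; reflexivity. Qed.

Lemma tail_value_bullets m A r :
  tail_value (bullets m A) r = tval_laters m (tail_value A r).
Proof. induction m as [|m IH]; simpl; [|rewrite IH]; reflexivity. Qed.

Lemma tail_value_lift B c r : tail_value (lift c B) r = tail_value B (env_del c r).
Proof.
  revert c r; induction B as [n|B1 _ B2 IH2|B1 IH|B1 IH]; intros c r; simpl; auto.
  - unfold env_del. destruct (c <=? n); reflexivity.
  - rewrite IH; reflexivity.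
  - rewrite IH. apply tail_value_ext. intros [|n]; unfold env_del, env_cons; simpl.
    + reflexivity.
    + destruct (c <=? n); reflexivity.
Qed.

Lemma tail_value_subst A k B r :
  tail_value (subst k B A) r = tail_value A (env_ins k (tail_value B r) r).
Proof.
  revert k B r; induction A as [n|A1 _ A2 IH2|A1 IH|A1 IH]; intros k B r; simpl; auto.
  - unfold env_ins. case_nat_tests; subst; try lia; reflexivity.
  - rewrite IH; reflexivity.
  - rewrite IH, tail_value_lift.
    apply tail_value_ext. intros n. rewrite env_ins_cons. reflexivity.
Qed.

Lemma tail_value_cons_ins A k v w r :
  tail_value A (env_cons w (env_ins k v r)) = tail_value A (env_ins (S k) v (env_cons w r)).
Proof. apply tail_value_ext. intros n. symmetry. apply env_ins_cons. Qed.

Lemma nth_map_true (l : list bool) n :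
  nth n (map (fun _ => true) l) false = (n <? length l).
Proof. revert n; induction l; intros [|n]; simpl; auto. Qed.

Lemma nth_true_lt (ctx : list bool) n : nth n ctx false = true -> n < length ctx.
Proof.
  intros H. destruct (Nat.lt_ge_cases n (length ctx)) as [|Hge]; auto.
  rewrite nth_overflow in H by exact Hge. discriminate.
Qed.

Lemma tv_aux_tail_value T ctx r :
  tv_aux T ctx = true -> (forall n, n < length ctx -> r n = Inf) -> tail_value T r = Inf.
Proof.
  revert ctx r; induction T as [n|T1 _ T2 _|T IH|T IH]; simpl; intros ctx r H Hr.
  - apply Hr, nth_true_lt, H.
  - discriminate.
  - rewrite (IH _ r H); auto. intros n. rewrite length_map. apply Hr.
  - apply (IH _ _ H). intros [|n] Hn; simpl in *; auto. apply Hr; lia.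
Qed.

Lemma top_variant_tail_value A r : top_variant A = true -> tail_value A r = Inf.
Proof.
  intros H. rewrite <- tail_value_tail. apply (tv_aux_tail_value _ [] r H).
  simpl; intros; lia.
Qed.

Lemma tail_value_ins_cases A k r :
  (exists m, forall v, tail_value A (env_ins k v r) = tval_laters m v) \/
  (forall v w, tail_value A (env_ins k v r) = tail_value A (env_ins k w r)).
Proof.
  revert k r; induction A as [n|A1 _ A2 IH2|A1 IH|A1 IH]; simpl; intros k r.
  - unfold env_ins. case_nat_tests; try (right; reflexivity). left; exists 0; auto.
  - apply IH2.
  - destruct (IH k r) as [[m Hm]|Hc].
    + left; exists (S m); intros v; rewrite Hm; reflexivity.
    + right; intros v w; rewrite (Hc v w); reflexivity.
  - setoid_rewrite tail_value_cons_ins. apply IH.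
Qed.

Lemma proper_tail_value_ins_cases C k r : proper k C = true ->
  (forall v w, tail_value C (env_ins k v r) = tail_value C (env_ins k w r)) \/
  (exists m, forall v, tail_value C (env_ins k v r) = tval_laters (S m) v).
Proof.
  revert k r; induction C as [n|C1 _ C2 IH2|C1 _|C1 IH]; simpl; intros k r Hp.
  - left. intros v w. unfold env_ins.
    case_nat_tests; try lia; auto; discriminate.
  - apply orb_true_iff in Hp as [Hp|Hp].
    + apply IH2. apply andb_true_iff in Hp. apply Hp.
    + left. intros v w. rewrite !top_variant_tail_value; auto.
  - destruct (tail_value_ins_cases C1 k r) as [[m Hm]|Hc].
    + right; exists m; intros v; rewrite Hm; reflexivity.
    + left; intros v w; rewrite (Hc v w); reflexivity.
  - apply orb_true_iff in Hp as [Hp|Hp].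
    + setoid_rewrite tail_value_cons_ins. apply IH, Hp.
    + left. intros v w.
      pose proof (top_variant_tail_value (TMu C1) (env_ins k v r) Hp) as Hv.
      pose proof (top_variant_tail_value (TMu C1) (env_ins k w r) Hp) as Hw.
      simpl in Hv, Hw. congruence.
Qed.

(* The value of [C[mu X.C/X]] is either independent of [X], or [tval_laters m]
   applied to the value of [X]; in the latter case [m >= 1] when [C] is proper
   in [X], and [Inf] is the only fixed point. *)
Lemma eqty_tail_value d A B : eqty d A B -> forall r, tail_value A r = tail_value B r.
Proof.
  induction 1 as [A _ | A B _ IH | A B C _ IH1 _ IH2 | A B _ IH | A B C D _ _ _ IH
    | A _ | A _ | A C _ _ Hp _ IH | A B _ _ _]; intros r; simpl; auto.
  - rewrite IH1; auto.
  - rewrite IH; reflexivity.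
  - unfold subst0. rewrite tail_value_subst. simpl.
    rewrite (tail_value_ext A _ _ (env_cons_ins0 Inf r)).
    destruct (tail_value_ins_cases A 0 r) as [[m Hm]|Hc].
    + rewrite !Hm, !tval_laters_Inf. reflexivity.
    + apply Hc.
  - specialize (IH r). unfold subst0 in IH. rewrite tail_value_subst in IH.
    rewrite (tail_value_ext C _ _ (env_cons_ins0 Inf r)).
    destruct (proper_tail_value_ins_cases C 0 r Hp) as [Hc|[m Hm]].
    + rewrite IH. apply Hc.
    + rewrite Hm in IH. symmetry in IH. apply tval_laters_fixpoint in IH.
      rewrite IH, Hm, tval_laters_Inf. reflexivity.
Qed.

(** * Top-variants are equal to top *)

Fixpoint top_subst (c L : nat) (A : ty) : ty :=
  match A with
  | TVar n => if n <? c then TVar n else if n <? c + L then top else TVar (n - L)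
  | TArr A1 A2 => TArr (top_subst c L A1) (top_subst c L A2)
  | TLater A1 => TLater (top_subst c L A1)
  | TMu A1 => TMu (top_subst (S c) L A1)
  end.

Lemma wf_top : wf top.
Proof. apply wf_mu; [apply wf_later, wf_var | reflexivity]. Qed.

Lemma top_subst_0 A c : top_subst c 0 A = A.
Proof.
  revert c; induction A; simpl; intros c; try congruence.
  case_nat_tests; try lia; f_equal; lia.
Qed.

Lemma top_subst_S A c L :
  top_subst c (S L) A = subst c top (top_subst (S c) L A).
Proof.
  revert c; induction A; intros c; simpl; try (f_equal; auto; fail).
  repeat (case_nat_tests; simpl); try lia; try reflexivity; f_equal; lia.
Qed.

Lemma tail_top_subst A c L : tail (top_subst c L A) = top_subst c L (tail A).
Proof.
  revert c; induction A; simpl; intros c; try congruence.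
  destruct (n <? c); [|destruct (n <? c + L)]; reflexivity.
Qed.

Lemma tv_aux_top_subst T ctx c L : length ctx <= c ->
  tv_aux T ctx = true -> tv_aux (top_subst c L T) ctx = true.
Proof.
  revert ctx c; induction T as [n|T1 _ T2 _|T IH|T IH]; simpl; intros ctx c Hl H.
  - apply nth_true_lt in H as Hn. case_nat_tests; try lia. exact H.
  - discriminate.
  - apply IH; auto. rewrite length_map; auto.
  - apply IH; simpl; auto. lia.
Qed.

Lemma top_variant_top_subst A c L :
  top_variant A = true -> top_variant (top_subst c L A) = true.
Proof.
  unfold top_variant. intros H. rewrite tail_top_subst.
  apply tv_aux_top_subst; simpl; auto. lia.
Qed.

Lemma proper_top_subst A x c L : x < c ->
  proper x A = true -> proper x (top_subst c L A) = true.
Proof.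
  revert x c; induction A as [n|A1 IH1 A2 IH2|A1 _|A1 IH]; intros x c Hx H.
  - simpl in *. case_nat_tests; try lia; simpl; auto.
    apply negb_true_iff, Nat.eqb_neq. lia.
  - simpl in *. apply orb_true_iff in H as [H|H].
    + apply andb_true_iff in H as [H1 H2]. rewrite IH1, IH2; auto.
    + rewrite top_variant_top_subst; auto. apply orb_true_r.
  - reflexivity.
  - change (proper (S x) (top_subst (S c) L A1)
            || top_variant (top_subst c L (TMu A1)) = true).
    simpl in H. apply orb_true_iff in H as [H|H].
    + rewrite IH; auto. lia.
    + rewrite top_variant_top_subst; auto. apply orb_true_r.
Qed.

Lemma wf_top_subst A c L : wf A -> wf (top_subst c L A).
Proof.
  intros HA; revert c; induction HA; intros c; simpl; try (constructor; auto).
  - destruct (n <? c); [constructor | destruct (n <? c + L)]; [apply wf_top | constructor].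
  - apply proper_top_subst; auto. lia.
Qed.

(* Substituting [top] for the [mu]-bound variables of the tail that have a
   [bullet] below their binder turns the tail into [top], which absorbs the
   arrows and bullets in front; then contract the [mu]s from the inside out. *)
Lemma tv_aux_eqty_top d A ctx : wf A ->
  tv_aux (tail A) ctx = true -> eqty d (top_subst 0 (length ctx) A) top.
Proof.
  intros HA; revert ctx; induction HA as [n|A B HA _ _ IH|A HA IH|A HA IH Hp];
    intros ctx Ht; simpl in *.
  - apply nth_true_lt in Ht. case_nat_tests; try lia. apply eq_refl, wf_top.
  - apply eq_trans with (TArr (top_subst 0 (length ctx) A) top).
    + apply eq_arr; auto. apply eq_refl, wf_top_subst, HA.
    + apply eq_arr_top, wf_top_subst, HA.
  - specialize (IH _ Ht). rewrite length_map in IH.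
    apply eq_trans with (TLater top).
    + apply eq_later, IH.
    + apply eq_sym, (eq_unfold d (TLater (TVar 0)) wf_top).
  - specialize (IH _ Ht). simpl in IH. rewrite top_subst_S in IH.
    apply eq_sym, eq_contract.
    + apply wf_top.
    + apply wf_top_subst, HA.
    + apply proper_top_subst; auto.
    + apply eq_sym, IH.
Qed.

Lemma top_variant_eqty_top d A : wf A -> top_variant A = true -> eqty d A top.
Proof.
  intros HA H. rewrite <- (top_subst_0 A 0). exact (tv_aux_eqty_top d A [] HA H).
Qed.

(** * Non-top-variants are in TF *)

Lemma tv_aux_mono T c1 c2 : length c1 <= length c2 ->
  (forall n, nth n c1 false = true -> nth n c2 false = true) ->
  tv_aux T c1 = true -> tv_aux T c2 = true.
Proof.
  revert c1 c2; induction T as [n|T1 _ T2 _|T IH|T IH]; simpl; intros c1 c2 Hl Hn H; auto.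
  - apply IH with (map (fun _ => true) c1); auto.
    + rewrite !length_map; auto.
    + intros n. rewrite !nth_map_true, !Nat.ltb_lt. lia.
  - apply IH with (false :: c1); simpl; auto.
    + lia.
    + intros [|n]; simpl; auto.
Qed.

Lemma top_variant_tv_aux A ctx : top_variant A = true -> tv_aux (tail A) ctx = true.
Proof.
  apply tv_aux_mono; simpl; [lia |]. intros [|n]; discriminate.
Qed.

(* [ctx] describes the binders passed along the tail as in [tv_aux]; the current
   expression must be proper in those with no [bullet] yet below them. *)
Lemma not_tv_aux_TFV A ctx (V : nat -> Prop) : wf A ->
  (forall n, V n <-> n < length ctx) ->
  (forall n, n < length ctx -> nth n ctx false = false -> proper n A = true) ->
  tv_aux (tail A) ctx = false -> TFV V A.
Proof.
  intros HA; revert ctx V; induction HA as [m | A B HA _ HB IHB | A HA IHA | A HA IHA Hp];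
    intros ctx V HV Hpr Htv; simpl in Htv.
  - apply tf_var. intros Vm. apply HV in Vm.
    specialize (Hpr m Vm Htv). simpl in Hpr. rewrite Nat.eqb_refl in Hpr. discriminate.
  - apply tf_arr; auto. apply (IHB ctx); auto.
    intros n Hn Hnth. specialize (Hpr n Hn Hnth). simpl in Hpr.
    apply orb_true_iff in Hpr as [H|H].
    + apply andb_true_iff in H. apply H.
    + apply (top_variant_tv_aux _ ctx) in H. congruence.
  - apply tf_later, (IHA (map (fun _ => true) ctx)); auto.
    + intros n. rewrite length_map. apply HV.
    + intros n Hn Hnth. rewrite nth_map_true in Hnth. rewrite length_map in Hn.
      apply Nat.ltb_lt in Hn. congruence.
  - apply tf_mu; [constructor; auto|]. apply (IHA (false :: ctx)); auto.
    + intros [|n]; simpl; [split; auto; lia | rewrite HV; lia].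
    + intros [|n] Hn Hnth; auto. simpl in Hn, Hnth.
      specialize (Hpr n ltac:(lia) Hnth).
      change (proper (S n) A || top_variant (TMu A) = true) in Hpr.
      apply orb_true_iff in Hpr as [H|H]; auto.
      apply (top_variant_tv_aux _ ctx) in H. simpl in H. congruence.
Qed.

Lemma not_top_variant_TF A : wf A -> top_variant A = false -> TF A.
Proof.
  intros HA H. apply (not_tv_aux_TFV A [] _ HA); simpl; auto; intros; lia.
Qed.

(** * TF expressions are tail finite *)

Fixpoint not_free (x : nat) (A : ty) : bool :=
  match A with
  | TVar n => negb (n =? x)
  | TArr A B => not_free x A && not_free x B
  | TLater A => not_free x A
  | TMu A => not_free (S x) A
  end.

Definition shift_index (c x : nat) : nat := if c <=? x then S x else x.

Lemma shift_index_S c x : S (shift_index c x) = shift_index (S c) (S x).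
Proof. unfold shift_index. simpl. destruct (c <=? x); reflexivity. Qed.

Lemma neq_var_not_free n x : n <> x -> not_free x (TVar n) = true.
Proof. intros H. apply negb_true_iff, Nat.eqb_neq, H. Qed.

Lemma not_free_proper A x : not_free x A = true -> proper x A = true.
Proof.
  revert x; induction A; simpl; intros x H; auto.
  - apply andb_true_iff in H as [H1 H2]. rewrite IHA1, IHA2; auto.
  - rewrite IHA; auto.
Qed.

Lemma not_free_lift B x c :
  not_free x B = true -> not_free (shift_index c x) (lift c B) = true.
Proof.
  revert x c; induction B; simpl; intros x c H.
  - apply negb_true_iff, Nat.eqb_neq in H. unfold shift_index.
    case_nat_tests; apply neq_var_not_free; lia.
  - apply andb_true_iff in H as [H1 H2]. rewrite IHB1, IHB2; auto.
  - auto.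
  - rewrite shift_index_S. auto.
Qed.

Lemma not_free_lift_self B c : not_free c (lift c B) = true.
Proof.
  revert c; induction B; simpl; intros c.
  - case_nat_tests; apply neq_var_not_free; lia.
  - rewrite IHB1, IHB2; auto.
  - auto.
  - auto.
Qed.

Lemma tv_aux_lift A ctx c : length ctx <= c ->
  tv_aux (tail A) ctx = true -> tv_aux (tail (lift c A)) ctx = true.
Proof.
  revert ctx c; induction A as [n|A1 _ A2 IH2|A IH|A IH]; simpl; intros ctx c Hl H; auto.
  - apply nth_true_lt in H as Hn. case_nat_tests; try lia. exact H.
  - apply IH; auto. rewrite length_map; auto.
  - apply IH; simpl; auto. lia.
Qed.

Lemma tv_aux_subst A ctx k B : length ctx <= k ->
  tv_aux (tail A) ctx = true -> tv_aux (tail (subst k B A)) ctx = true.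
Proof.
  revert ctx k B; induction A as [n|A1 _ A2 IH2|A IH|A IH]; simpl; intros ctx k B Hl H; auto.
  - apply nth_true_lt in H as Hn. case_nat_tests; try lia. exact H.
  - apply IH; auto. rewrite length_map; auto.
  - apply IH; simpl; auto. lia.
Qed.

Lemma proper_lift A x c :
  proper x A = true -> proper (shift_index c x) (lift c A) = true.
Proof.
  revert x c; induction A as [n|A1 IH1 A2 IH2|A1 _|A1 IH]; intros x c H.
  - apply not_free_proper, not_free_lift, H.
  - simpl in *. apply orb_true_iff in H as [H|H].
    + apply andb_true_iff in H as [H1 H2]. rewrite IH1, IH2; auto.
    + unfold top_variant in *. rewrite tv_aux_lift; simpl; auto using orb_true_r with arith.
  - reflexivity.
  - change (proper (S (shift_index c x)) (lift (S c) A1)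
            || top_variant (lift c (TMu A1)) = true).
    simpl in H. apply orb_true_iff in H as [H|H].
    + rewrite shift_index_S, IH; auto.
    + unfold top_variant in *. rewrite tv_aux_lift; simpl; auto using orb_true_r with arith.
Qed.

Lemma proper_subst A x k B : x < k -> not_free x B = true ->
  proper x A = true -> proper x (subst k B A) = true.
Proof.
  revert x k B; induction A as [n|A1 IH1 A2 IH2|A1 _|A1 IH]; intros x k B Hx HB H.
  - simpl in *. apply negb_true_iff, Nat.eqb_neq in H.
    case_nat_tests; try lia; apply not_free_proper; auto; apply neq_var_not_free; lia.
  - simpl in *. apply orb_true_iff in H as [H|H].
    + apply andb_true_iff in H as [H1 H2]. rewrite IH1, IH2; auto.
    + unfold top_variant in *. rewrite tv_aux_subst; simpl; auto using orb_true_r with arith.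
  - reflexivity.
  - change (proper (S x) (subst (S k) (lift 0 B) A1)
            || top_variant (subst k B (TMu A1)) = true).
    simpl in H. apply orb_true_iff in H as [H|H].
    + rewrite IH; auto; [lia | apply (not_free_lift B x 0 HB)].
    + unfold top_variant in *. rewrite tv_aux_subst; simpl; auto using orb_true_r with arith.
Qed.

Lemma wf_lift A c : wf A -> wf (lift c A).
Proof.
  intros HA; revert c; induction HA; intros c; simpl; try (constructor; auto).
  - destruct (c <=? n); constructor.
  - apply (proper_lift A 0 (S c)); auto.
Qed.

Lemma wf_subst A k B : wf A -> wf B -> wf (subst k B A).
Proof.
  intros HA; revert k B; induction HA; intros k B0 HB; simpl; try (constructor; auto).
  - destruct (n =? k); auto. destruct (k <? n); constructor.
  - apply IHHA, wf_lift, HB.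
  - apply proper_subst; auto; [lia | apply not_free_lift_self].
Qed.

Lemma TFV_ext V V' A : (forall n, V n <-> V' n) -> TFV V A -> TFV V' A.
Proof.
  intros HV HA; revert V' HV; induction HA; intros V' HV.
  - apply tf_var. rewrite <- HV. assumption.
  - apply tf_later; auto.
  - apply tf_arr; auto.
  - apply tf_mu; auto. apply IHHA. intros [|n]; [tauto | apply HV].
Qed.

Lemma TFV_subst V A k B : TFV V A -> V k -> wf B ->
  TFV (fun n => if n <? k then V n else V (S n)) (subst k B A).
Proof.
  intros HA; revert k B; induction HA as [V n HV | V A _ IH | V A B1 HA _ IH | V A Hw _ IH];
    intros k B Hk HB; simpl.
  - assert (n <> k) by (intros ->; contradiction).
    case_nat_tests; try lia; apply tf_var; case_nat_tests; try lia; auto.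
    destruct n; [lia | exact HV].
  - apply tf_later; auto.
  - apply tf_arr; auto. apply wf_subst; auto.
  - apply tf_mu; [exact (wf_subst _ k B Hw HB) |].
    eapply TFV_ext; [| apply (IH (S k) (lift 0 B)); auto; apply wf_lift, HB].
    intros [|n]; simpl; [tauto |]. case_nat_tests; try lia; tauto.
Qed.

Fixpoint spine_length (A : ty) : nat :=
  match A with
  | TVar _ => 0
  | TArr _ B => S (spine_length B)
  | TLater A | TMu A => S (spine_length A)
  end.

Lemma spine_length_subst V A k B : TFV V A -> V k ->
  spine_length (subst k B A) = spine_length A.
Proof.
  intros HA; revert k B; induction HA; intros k B0 Hk; simpl; auto.
  assert (n <> k) by (intros ->; contradiction). case_nat_tests; try lia; auto.
Qed.

(* Induction on the spine length: unfolding a [mu] whose bound variable is not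
   in the tail leaves the spine length unchanged, and drops the [mu]. *)
Lemma TFV_tail_finite n V A : spine_length A <= n -> TFV V A -> tail_finite A.
Proof.
  revert V A; induction n as [|n IH]; intros V A Hsp HA;
    destruct HA as [V x HV | V A HA | V A B HA HB | V A Hw HA]; simpl in Hsp; try lia.
  - exists [], 0, x. split; [constructor | apply eq_refl; constructor].
  - exists [], 0, x. split; [constructor | apply eq_refl; constructor].
  - destruct (IH V A ltac:(lia) HA) as [[|[m B] l] [mn [x [Hf Hc]]]].
    + exists [], (S mn), x. split; auto. exact (eq_later _ _ _ Hc).
    + exists ((S m, B) :: l), mn, x. split; [inversion Hf; constructor; auto|].
      exact (eq_later _ _ _ Hc).
  - destruct (IH V B ltac:(lia) HB) as [l [mn [x [Hf Hc]]]].
    exists ((0, A) :: l), mn, x. split; [constructor; auto |].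
    exact (eq_arr _ _ _ _ _ (eq_refl _ _ HA) Hc).
  - assert (HA' : TFV V (subst0 (TMu A) A)).
    { eapply TFV_ext; [| apply (TFV_subst _ _ 0 (TMu A) HA); simpl; auto].
      intros m; simpl. tauto. }
    assert (Hs : spine_length (subst0 (TMu A) A) = spine_length A)
      by (apply (spine_length_subst _ _ _ _ HA); simpl; auto).
    destruct (IH V (subst0 (TMu A) A) ltac:(lia) HA') as [l [mn [x [Hf Hc]]]].
    exists l, mn, x. split; auto. eapply eq_trans; [apply eq_unfold, Hw | exact Hc].
Qed.

Lemma TF_tail_finite A : TF A -> tail_finite A.
Proof. apply (TFV_tail_finite (spine_length A)), le_n. Qed.

Lemma tail_value_tf_form l mn x : tail_value (tf_form l mn x) (fun n => Fin 0 n) <> Inf.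
Proof.
  induction l as [|[m B] l IH]; simpl; rewrite tail_value_bullets; simpl.
  - rewrite tval_laters_Fin. discriminate.
  - destruct (tail_value (tf_form l mn x) _) eqn:E; [|contradiction].
    rewrite tval_laters_Fin. discriminate.
Qed.

Lemma tail_finite_not_eqty_top d A : tail_finite A -> ~ eqty d A top.
Proof.
  intros [l [mn [x [_ Hc]]]] Htop.
  apply (tail_value_tf_form l mn x).
  rewrite <- (eqty_tail_value _ _ _ Hc), (eqty_tail_value _ _ _ Htop). reflexivity.
Qed.

Theorem theorem8 : forall (dist : bool) (A : ty), wf A ->
  (TF A <-> tail_finite A) /\
  (tail_finite A <-> ~ eqty dist A top) /\
  (~ eqty dist A top <-> top_variant A = false).
Proof.
  intros d A HA.
  assert (Hd : ~ eqty d A top -> top_variant A = false).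
  { intros Hne. destruct (top_variant A) eqn:E; [|reflexivity].
    contradiction (Hne (top_variant_eqty_top d A HA E)). }
  pose proof (TF_tail_finite A) as Hab.
  pose proof (tail_finite_not_eqty_top d A) as Hbc.
  pose proof (not_top_variant_TF A HA) as Hda.
  repeat split; tauto.
Qed.
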